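(* If a closed properly convex domain $\Omega\subset\mathbb{RP}^n$ is preserved by a linear flow $\Phi$, then $\Omega$ is reducible and $\Phi$ is hyperbolic.
   Context: $\Omega$ is properly convex if its closure is a compact convex subset of some affine chart. A properly convex set $\Omega$ is reducible if there are disjoint proper projective subspaces $\mathbb{RP}^a,\mathbb{RP}^b\subsetneq\mathbb{RP}^n$ such that every point of $\Omega$ lies on a line segment in $\Omega$ with one endpoint in $\mathbb{RP}^a\cap\mathrm{cl}\,\Omega$ and the other in $\mathbb{RP}^b\cap\mathrm{cl}\,\Omega$. A linear flow is an injective homomorphism $\Phi:\mathbb{R}\to\mathrm{PGL}(n+1,\mathbb{R})$ such that the orbit of every point is a proper subset of a projective line. It is hyperbolic if, after reparameterizing by an isomorphism of $\mathbb{R}$, there is a decomposition $\mathbb{R}^{n+1}=A\oplus B$ with $\Phi_t[a+b]=[a+e^tb]$ for $a\in A$, $b\in B$. *)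

From HB Require Import structures.
From mathcomp Require Import all_boot all_order all_algebra.
From mathcomp Require Import all_classical all_reals all_analysis.
Set Implicit Arguments. Unset Strict Implicit. Unset Printing Implicit Defensive.
Import Order.TTheory GRing.Theory Num.Theory.
Import numFieldNormedType.Exports.
Local Open Scope classical_set_scope.
Local Open Scope ring_scope.

(* The projective space RP^n is P(R^(n+1)), with R^(n+1) = 'rV[R]_(n.+1)
   (row vectors).  A point of RP^n is the class [v] of a nonzero vector v.
   A subset X of RP^n is represented by its lift: the predicate on vectors
   "v <> 0 /\ [v] in X".  All predicates on projective sets below are stated
   for such lifts (scale-invariant sets of nonzero vectors). *)

Section Proj.
Variables (R : realType) (n : nat).
Local Notation V := 'rV[R]_(n.+1).

Definition proj_eq (u v : V) : Prop :=
  u != 0 /\ exists c : R, c != 0 /\ v = c *: u.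

Definition proj_set (X : set V) : Prop :=
  (forall v, X v -> v != 0) /\
  (forall v (c : R), X v -> c != 0 -> X (c *: v)).

(* Closure in RP^n.  The quotient map V\{0} -> RP^n is open, so the preimage
   of the closure is the closure (in V\{0}) of the preimage. *)
Definition pclosure (X : set V) : set V :=
  fun v => v != 0 /\ closure X v.

Definition pclosed (X : set V) : Prop := pclosure X = X.

(* Nonempty interior in RP^n (again using openness of the quotient map). *)
Definition has_nonempty_interior (X : set V) : Prop :=
  exists v, (interior X) v.

Definition convex_vset (K : set V) : Prop :=
  forall u v (s : R), K u -> K v -> 0 <= s -> s <= 1 ->
    K (s *: u + (1 - s) *: v).

(* Affine chart A_f = {[v] : v *m f <> 0} for a nonzero linear functional f,
   identified with the affine hyperplane {v : v *m f = 1}. *)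
Definition properly_convex (X : set V) : Prop :=
  exists f : 'cV[R]_(n.+1),
    f != 0 /\
    (forall v, pclosure X v -> (v *m f) 0 0 != 0) /\
    let K := fun v : V => (v *m f) 0 0 = 1 /\ pclosure X v in
    compact K /\ convex_vset K.

(* Projective subspaces RP^a are P(U) for linear subspaces U of R^(n+1),
   represented as row spaces of square matrices (mxalgebra).
   Proper and nonempty: 0 < rank U < n+1. *)
Definition proper_proj_subspace (U : 'M[R]_(n.+1)) : Prop :=
  (0 < \rank U)%N /\ (\rank U < n.+1)%N.

Definition on_segment_between (X : set V) (A B : 'M[R]_(n.+1)) (x : V) : Prop :=
  exists p q : V,
    (p <= A)%MS /\ pclosure X p /\
    (q <= B)%MS /\ pclosure X q /\
    (forall s : R, 0 <= s -> s <= 1 -> X (s *: p + (1 - s) *: q)) /\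
    (exists s : R, 0 <= s /\ s <= 1 /\ proj_eq x (s *: p + (1 - s) *: q)).

Definition reducible (X : set V) : Prop :=
  exists A B : 'M[R]_(n.+1),
    proper_proj_subspace A /\ proper_proj_subspace B /\
    (A :&: B == (0 : 'M[R]_(n.+1)))%MS /\
    forall x, X x -> on_segment_between X A B x.

(* Elements of PGL(n+1,R) are represented by invertible matrices, acting on
   row vectors by v |-> v *m M; two matrices give the same element iff they
   are proportional. *)
Definition pgl_eq (M N : 'M[R]_(n.+1)) : Prop :=
  exists c : R, c != 0 /\ N = c *: M.

(* A linear flow: an injective continuous homomorphism R -> PGL(n+1,R),
   given by a continuous family of invertible representatives Phi t, such
   that the orbit of every point is a proper subset of a projective line. *)
Definition linear_flow (Phi : R -> 'M[R]_(n.+1)) : Prop :=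
  continuous Phi /\
  (forall t, Phi t \in unitmx) /\
  (forall s t, pgl_eq (Phi (s + t)) (Phi s *m Phi t)) /\
  (forall s t, pgl_eq (Phi s) (Phi t) -> s = t) /\
  (forall v : V, v != 0 ->
     exists L : 'M[R]_(n.+1),
       \rank L = 2%N /\
       (forall t, (v *m Phi t <= L)%MS) /\
       exists u : V, u != 0 /\ (u <= L)%MS /\
         forall t, ~ proj_eq (v *m Phi t) u).

Definition preserves (Phi : R -> 'M[R]_(n.+1)) (X : set V) : Prop :=
  forall t v, X v -> X (v *m Phi t).

Definition hyperbolic (Phi : R -> 'M[R]_(n.+1)) : Prop :=
  exists (c : R) (A B : 'M[R]_(n.+1)),
    c != 0 /\
    (A :&: B == (0 : 'M[R]_(n.+1)))%MS /\ (A + B == 1%:M)%MS /\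
    forall (t : R) (a b : V), (a <= A)%MS -> (b <= B)%MS -> a + b != 0 ->
      proj_eq ((a + b) *m Phi (c * t)) (a + expR t *: b).

End Proj.

From HB Require Import structures.
From mathcomp Require Import all_boot all_order all_algebra.
From mathcomp Require Import all_classical all_reals all_analysis.
From mathcomp Require Import ring lra.
Set Implicit Arguments. Unset Strict Implicit. Unset Printing Implicit Defensive.
Import Order.TTheory GRing.Theory Num.Theory.
Import numFieldNormedType.Exports.
Local Open Scope classical_set_scope.
Local Open Scope ring_scope.

(* Write [T] for the time-one map [Phi 1] and [fv] for the linear functional
   whose level set [fv = 1] is an affine chart containing [cl Omega].  Every
   orbit lies in a projective line, so [v], [v T] and [v T^2] are dependent.
   As [T] preserves the cone over [Omega], the sign of [fv x * fv (x T)] does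
   not depend on [x] in the cone; this excludes complex eigenvalues (the
   ratios [fv (v T^(k+1)) / fv (v T^k)] would have to decrease by a fixed
   amount forever) and Jordan blocks (along [v + k w], [k] in [Z], [fv] is
   affine with nonzero slope, so it changes sign in one of the two
   directions).  Hence every point of [Omega] is a sum of eigenvectors, and
   since [Omega] has interior and [T] is not scalar, [R^(n+1) = A (+) B] for
   exactly two eigenspaces of [T].  The flow commutes with [T], so it acts by
   a scalar on [A] and on [B]; the ratio of the two scalars is a continuous
   positive character of [R], i.e. [t |-> exp (kappa t)] with [kappa <> 0],
   which is hyperbolicity.  Finally the flow slides a point [a + b] of
   [Omega] along all of [a + r b], [r > 0], and closedness puts [a] and [b]
   in [Omega]: this is reducibility. *)

Section EigenAlgebra.
Variables (R : fieldType) (m : nat).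
Local Notation V := 'rV[R]_m.
Implicit Types (x y z : V) (T L M : 'M[R]_m).

Lemma rank2_span L x y z :
  \rank L = 2%N -> (x <= L)%MS -> (y <= L)%MS -> (z <= L)%MS -> x != 0 ->
  ~~ (y <= x)%MS -> exists a b : R, z = a *: x + b *: y.
Proof.
move=> rL xL yL zL x0 yx.
have sL : (x + y <= L)%MS by rewrite addsmx_sub xL yL.
have lt : (x < x + y)%MS.
  rewrite ltmxE addsmxSl /=; apply: contra yx => h.
  exact: submx_trans (addsmxSr x y) h.
have rk : (1 < \rank (x + y)%MS)%N by move: (rank_ltmx lt); rewrite rank_rV x0.
have Ls : (L <= x + y)%MS.
  have [_ /= <-] := mxrank_leqif_sup sL.
  by rewrite rL eqn_leq rk -rL mxrankS.
have /sub_addsmxP [[u1 u2] /= ->] := submx_trans zL Ls.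
exists (u1 0 0), (u2 0 0).
by rewrite {1}[u1]mx11_scalar {1}[u2]mx11_scalar !mul_scalar_mx.
Qed.

Lemma scaler_injl x (a b : R) : x != 0 -> a *: x = b *: x -> a = b.
Proof.
move=> x0 /eqP; rewrite -subr_eq0 -scalerBl scaler_eq0 (negbTE x0) orbF subr_eq0.
by move/eqP.
Qed.

Lemma eigenvector_eq0 T (l l' : R) x :
  l != l' -> x *m T = l *: x -> x *m T = l' *: x -> x = 0.
Proof.
move=> d h h'; apply/eqP; move: h; rewrite h' => /eqP; rewrite -subr_eq0 -scalerBl.
by rewrite scaler_eq0 subr_eq0 eq_sym (negbTE d).
Qed.

Lemma eigen3_coef0 T (e1 e2 e3 : V) (l1 l2 l3 c1 c2 c3 : R) : e1 != 0 ->
  e1 *m T = l1 *: e1 -> e2 *m T = l2 *: e2 -> e3 *m T = l3 *: e3 ->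
  l1 != l2 -> l1 != l3 -> c1 *: e1 + c2 *: e2 + c3 *: e3 = 0 -> c1 = 0.
Proof.
move=> e10 h1 h2 h3 d12 d13 hu.
set u := c1 *: e1 + c2 *: e2 + c3 *: e3 in hu.
have uT : u *m T = (c1 * l1) *: e1 + (c2 * l2) *: e2 + (c3 * l3) *: e3.
  by rewrite /u !mulmxDl -!scalemxAl h1 h2 h3 !scalerA.
set w := (c1 * (l1 - l3)) *: e1 + (c2 * (l2 - l3)) *: e2.
have w0 : w = 0.
  have <- : u *m T - l3 *: u = w by rewrite uT /u /w; apply/rowP => j; rewrite !mxE; ring.
  by rewrite hu mul0mx scaler0 subrr.
have : (c1 * (l1 - l3) * (l1 - l2)) *: e1 = w *m T - l2 *: w.
  by rewrite /w mulmxDl -!scalemxAl h1 h2; apply/rowP => j; rewrite !mxE; ring.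
rewrite w0 mul0mx scaler0 subrr => /eqP; rewrite scaler_eq0 (negbTE e10) orbF.
by rewrite !mulf_eq0 !subr_eq0 (negbTE d12) (negbTE d13) !orbF => /eqP.
Qed.

Lemma eigenspace_scalar T M (l : R) (a0 : V) (x0 : R) :
  (forall a : V, a *m T = l *: a -> exists k : R, a *m M = k *: a) ->
  a0 != 0 -> a0 *m T = l *: a0 -> a0 *m M = x0 *: a0 ->
  forall a : V, a *m T = l *: a -> a *m M = x0 *: a.
Proof.
move=> H a00 ea0 ex0 a ea.
have [k ex] := H a ea.
have [k' ez] : exists k', (a + a0) *m M = k' *: (a + a0).
  by apply: H; rewrite mulmxDl ea ea0 scalerDr.
have [s0|s0] := eqVneq (a + a0) 0.
  by rewrite (_ : a = - a0) ?mulNmx ?ex0 ?scalerN // -(addrK a0 a) s0 sub0r.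
have e2 : (k - k') *: a = (k' - x0) *: a0.
  apply/eqP; rewrite -subr_eq0.
  have -> : (k - k') *: a - (k' - x0) *: a0 = k *: a + x0 *: a0 - k' *: (a + a0).
    by apply/rowP => j; rewrite !mxE; ring.
  by rewrite -ex -ex0 -ez mulmxDl subrr.
have [kk'|kk'] := eqVneq k k'.
  move: e2; rewrite kk' subrr scale0r => /esym/eqP.
  by rewrite scaler_eq0 (negbTE a00) orbF subr_eq0 => /eqP k'x0; rewrite ex kk' k'x0.
have -> : a = ((k' - x0) / (k - k')) *: a0.
  by rewrite mulrC -scalerA -e2 scalerA mulVf ?subr_eq0 // scale1r.
by rewrite -scalemxAl ex0 !scalerA mulrC.
Qed.

End EigenAlgebra.

Definition fval (R : pzRingType) (m : nat) (f : 'cV[R]_m) (v : 'rV[R]_m) : R :=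
  (v *m f) 0 0.

Section Functional.
Variables (R : pzRingType) (m : nat) (f : 'cV[R]_m).

Lemma fvalD x y : fval f (x + y) = fval f x + fval f y.
Proof. by rewrite /fval mulmxDl mxE. Qed.

Lemma fvalZ a x : fval f (a *: x) = a * fval f x.
Proof. by rewrite /fval -scalemxAl mxE. Qed.

Lemma fvalN x : fval f (- x) = - fval f x.
Proof. by rewrite /fval mulNmx mxE. Qed.

End Functional.

Section ConvexCone.
Variables (R : realFieldType) (m : nat) (Om : set 'rV[R]_m) (f : 'cV[R]_m).
Local Notation fv := (fval f).
Hypothesis Om_scale : forall v c, Om v -> c != 0 -> Om (c *: v).
Hypothesis fval_Om : forall v, Om v -> fv v != 0.
Hypothesis Om_convex : forall u v s, Om u -> Om v -> fv u = 1 -> fv v = 1 ->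
  0 <= s -> s <= 1 -> Om (s *: u + (1 - s) *: v).

Lemma cone_conic_comb x y a b : Om x -> Om y -> 0 < fv x -> 0 < fv y ->
  0 <= a -> 0 <= b -> 0 < a + b -> Om (a *: x + b *: y).
Proof.
move=> Ox Oy fx fy a0 b0 ab.
have fx0 : fv x != 0 by rewrite gt_eqF.
have fy0 : fv y != 0 by rewrite gt_eqF.
set Z := a * fv x + b * fv y.
have Z0 : 0 < Z.
  rewrite /Z; have [a0e|a0'] := eqVneq a 0.
    by rewrite a0e mul0r add0r; rewrite a0e add0r in ab; exact: mulr_gt0.
  have ap : 0 < a by rewrite lt_def a0' a0.
  by rewrite ltr_pwDl ?mulr_ge0 ?mulr_gt0 // ltW.
set s := a * fv x / Z.
have s0 : 0 <= s by rewrite /s divr_ge0 // ?mulr_ge0 // ltW.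
have s1 : s <= 1 by rewrite /s ler_pdivrMr // mul1r /Z lerDl mulr_ge0 // ltW.
have := Om_convex (Om_scale Ox (invr_neq0 fx0)) (Om_scale Oy (invr_neq0 fy0)) _ _ s0 s1.
rewrite !fvalZ !mulVf // => /(_ erefl erefl) H.
have -> : a *: x + b *: y =
    Z *: (s *: ((fv x)^-1 *: x) + (1 - s) *: ((fv y)^-1 *: y)).
  by apply/rowP => j; rewrite !mxE /s /Z; field; rewrite fx0 fy0 gt_eqF.
by apply: Om_scale; rewrite ?gt_eqF.
Qed.

Lemma cone_segment x y s : Om x -> Om y -> 0 < fv x * fv y -> 0 <= s -> s <= 1 ->
  Om (s *: x + (1 - s) *: y).
Proof.
move=> Ox Oy hxy s0 s1.
have s1' : 0 <= 1 - s by rewrite subr_ge0.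
have ss : 0 < s + (1 - s) by rewrite addrC subrK ltr01.
case: (ltrgtP (fv x) 0) => hx; last by move: (fval_Om Ox); rewrite hx eqxx.
  have hy : fv y < 0 by nra.
  have m1 : (-1 : R) != 0 by rewrite oppr_eq0 oner_eq0.
  have := cone_conic_comb (Om_scale Ox m1) (Om_scale Oy m1) _ _ s0 s1' ss.
  rewrite !scaleN1r !fvalN !oppr_gt0 => /(_ hx hy) /Om_scale /(_ m1).
  by rewrite scaleN1r opprD !scalerN !opprK.
have hy : 0 < fv y by nra.
exact: cone_conic_comb.
Qed.

Lemma cone_rescale_same_sign x p : Om x -> Om p ->
  Om ((fv x * fv p) *: p) /\ 0 < fv x * fv ((fv x * fv p) *: p).
Proof.
move=> Ox Op; split; first by apply: Om_scale => //; rewrite mulf_neq0 ?fval_Om.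
rewrite fvalZ (_ : fv x * (fv x * fv p * fv p) = (fv x * fv p) ^+ 2); last by ring.
by rewrite exprn_even_gt0 // mulf_neq0 ?fval_Om.
Qed.

Variable M : 'M[R]_m.
Hypothesis M_pres : forall z, Om z -> Om (z *m M).

(* Otherwise [M] would map the point [|q| x + |p| y] of the cone to [fv = 0]. *)
Lemma fval_mulmx_sign_pos x y : Om x -> Om y -> 0 < fv x -> 0 < fv y ->
  0 < fv (x *m M) * fv (y *m M).
Proof.
move=> Ox Oy fx fy.
have p0 : fv (x *m M) != 0 by apply/fval_Om/M_pres.
have q0 : fv (y *m M) != 0 by apply/fval_Om/M_pres.
rewrite lt_def mulf_neq0 //= leNgt; apply/negP => neg.
set p := fv (x *m M) in p0 neg *; set q := fv (y *m M) in q0 neg *.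
have Oz : Om (`|q| *: x + `|p| *: y).
  by apply: cone_conic_comb; rewrite ?normr_ge0 // ltr_pwDl ?normr_gt0.
have := fval_Om (M_pres Oz); rewrite mulmxDl -!scalemxAl fvalD !fvalZ -/p -/q.
case: (ltrgtP p 0) => hp; last by move: p0; rewrite hp eqxx.
- have hq : 0 < q by nra.
  by rewrite (ltr0_norm hp) (gtr0_norm hq) => /eqP; apply; ring.
- have hq : q < 0 by nra.
  by rewrite (gtr0_norm hp) (ltr0_norm hq) => /eqP; apply; ring.
Qed.

Lemma fval_mulmx_sign_const x y : Om x -> Om y ->
  0 < fv x * fv (x *m M) * (fv y * fv (y *m M)).
Proof.
move=> Ox Oy.
have := @fval_mulmx_sign_pos (fv x *: x) (fv y *: y).
rewrite !fvalZ -!scalemxAl !fvalZ -!expr2 !exprn_even_gt0 ?fval_Om //.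
move=> /(_ (Om_scale Ox (fval_Om Ox)) (Om_scale Oy (fval_Om Oy)) isT isT).
by rewrite mulrACA.
Qed.

End ConvexCone.

Section RealSequences.
Variable R : archiRealFieldType.

Lemma no_uniform_decrease (p : nat -> R) (d : R) : 0 < d ->
  (forall k, 0 < p k) -> (forall k, d <= p k * (p k - p k.+1)) -> False.
Proof.
move=> d0 pp step.
have p00 := pp 0%N.
have bnd k : p k <= p 0%N - k%:R * (d / p 0%N).
  elim: k => [|k IH]; first by rewrite mul0r subr0.
  have hk := step k; have pk := pp k.
  have dec : 0 < p k - p k.+1.
    by rewrite -(pmulr_rgt0 _ pk); exact: lt_le_trans hk.
  have hh : 0 <= k%:R * (d / p 0%N) by rewrite mulr_ge0 // divr_ge0 // ltW.
  have : d / p 0%N <= p k - p k.+1.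
    by rewrite ler_pdivrMr //; apply: le_trans hk _; rewrite mulrC ler_pM2l //; lra.
  rewrite -natr1 mulrDl mul1r; lra.
pose N := Num.Def.archi_bound (p 0%N ^+ 2 / d).
have hN := @archi_boundP _ (p 0%N ^+ 2 / d) (ltW (divr_gt0 (exprn_gt0 _ p00) d0)).
have : p 0%N < N%:R * (d / p 0%N).
  by move: hN; rewrite ltr_pdivrMr // mulrA ltr_pdivlMr // -expr2.
have := bnd N; have := pp N; lra.
Qed.

End RealSequences.

Lemma sign_alternation_even (R : realDomainType) (c : R) (u : nat -> R) :
  (forall k, 0 < c * (u k * u k.+1)) -> forall m, 0 < u 0%N * u m.*2.
Proof.
move=> hu; elim=> [|m IH].
  rewrite double0 -expr2 exprn_even_gt0 //.
  by apply: contraTneq (hu 0%N) => ->; rewrite !(mul0r, mulr0) ltxx.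
have := hu m.*2; have := hu m.*2.+1; rewrite doubleS; nra.
Qed.

Lemma closure_norm_approx (R : realType) (m : nat) (A : set 'rV[R]_m) x :
  (forall e : R, 0 < e -> exists y, A y /\ `|x - y| < e) -> closure A x.
Proof.
move=> H B /nbhs_ballP [e e0 sB]; have [y [Ay hy]] := H e e0.
by exists y; split => //; apply: sB; rewrite -ball_normE.
Qed.

Lemma interior_ray (R : realType) (m : nat) (A : set 'rV[R]_m) v0 c :
  interior A v0 -> exists2 d : R, 0 < d & A (v0 + d *: c).
Proof.
move=> /nbhs_ballP [e /= e0 sB].
have [->|c0] := eqVneq c 0.
  by exists 1; rewrite ?scaler0 ?addr0 //; apply: sB; apply: ballxx.
have nc : 0 < `|c| by rewrite normr_gt0.
exists (e / (2 * `|c|)); first by rewrite divr_gt0 // mulr_gt0.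
apply: sB; rewrite -ball_normE /ball_ /= opprD addrA subrr add0r normrN normrZ.
rewrite gtr0_norm ?divr_gt0 ?mulr_gt0 //.
have -> : e / (2 * `|c|) * `|c| = e / 2 by field; rewrite gt_eqF.
by rewrite ltr_pdivrMr // ltr_pMr // ltr1n.
Qed.

Lemma interior_subspace_full (R : realType) (m : nat) (A : set 'rV[R]_m)
    (S : 'M[R]_m) :
  (exists v, interior A v) -> (forall v, A v -> (v <= S)%MS) ->
  forall x : 'rV[R]_m, (x <= S)%MS.
Proof.
move=> [v0 iv] AS x; have [k k0 Ay] := interior_ray x iv.
have : ((v0 + k *: x + (-1) *: v0)%R <= S)%MS.
  by apply: addmx_sub; [exact: AS | apply/scalemx_sub/AS/(nbhs_singleton iv)].
rewrite scaleN1r addrAC subrr add0r => /(scalemx_sub k^-1).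
by rewrite scalerA mulVf ?gt_eqF ?scale1r.
Qed.

Lemma continuous_mulmx_entry (R : realType) (m : nat) (Phi : R -> 'M[R]_m)
    (a : 'rV[R]_m) j :
  continuous Phi -> continuous (fun t => (a *m Phi t) 0 j).
Proof.
move=> Phi_cont.
have -> : (fun t => (a *m Phi t) 0 j) = (fun t => \sum_k a 0 k * Phi t k j).
  by apply: funext => t; rewrite mxE.
apply: continuous_big; first exact: add_continuous.
move=> k _ t; apply: continuousM; first exact: cvg_cst.
exact: (continuous_comp (Phi_cont t) (@coord_continuous R m m k j _)).
Qed.

Section CauchyEquation.
Variables (R : realType) (h : R -> R).
Hypothesis h_additive : forall s t, h (s + t) = h s + h t.

Lemma additive0 : h 0 = 0.
Proof. by have := h_additive 0 0; rewrite addr0; lra. Qed.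

Lemma additive_natrM (k : nat) t : h (k%:R * t) = k%:R * h t.
Proof.
elim: k => [|k IH]; first by rewrite !mul0r additive0.
by rewrite -natr1 !mulrDl !mul1r h_additive IH.
Qed.

Lemma additive_rat_eq0 : h 1 = 0 -> forall (z : int) (k : nat), h (z%:~R / k.+1%:R) = 0.
Proof.
move=> h1 z k.
have hint (j : int) : h j%:~R = 0.
  case: j => j; first by rewrite -[j%:~R]mulr1 additive_natrM h1 mulr0.
  have := h_additive (Negz j)%:~R j.+1%:R.
  by rewrite NegzE intrN addNr additive0 -[j.+1%:R]mulr1 additive_natrM h1; lra.
have := additive_natrM k.+1 (z%:~R / k.+1%:R).
rewrite mulrC divfK ?pnatr_eq0 // hint => /eqP; rewrite eq_sym mulf_eq0 pnatr_eq0 /=.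
by move/eqP.
Qed.

Hypothesis h_cont : continuous h.

Lemma continuous_additive_eq0 : h 1 = 0 -> forall t, h t = 0.
Proof.
move=> h1 t; apply/eqP; rewrite -normr_eq0; apply/negPn/negP => hne.
have e0 : 0 < `|h t| by rewrite lt_def hne normr_ge0.
have := @h_cont t; move/cvgrPdist_lt =>  /(_ _ e0) /nbhs_ballP [d /= d0 Hd].
pose k := Num.Def.archi_bound d^-1.
have hk : d^-1 < k%:R by apply: archi_boundP; rewrite invr_ge0 ltW.
pose z := Num.Def.floor (k.+1%:R * t).
have k0 : (0 : R) < k.+1%:R by rewrite ltr0n.
suff : `|h t - h (z%:~R / k.+1%:R)| < `|h t| by rewrite additive_rat_eq0 // subr0 ltxx.
apply: Hd; rewrite -ball_normE /ball_ /=.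
have f1 := floor_le (k.+1%:R * t); have f2 := floorD1_gt (k.+1%:R * t).
rewrite intrD /= -/z (_ : (1%:~R : R) = 1) // in f2.
have -> : t - z%:~R / k.+1%:R = (k.+1%:R * t - z%:~R) / k.+1%:R.
  by field; rewrite gt_eqF.
rewrite normrM normfV (gtr0_norm k0) ger0_norm ?subr_ge0 // ltr_pdivrMr //.
have : d^-1 < k.+1%:R by apply: lt_le_trans hk _; rewrite ler_nat.
rewrite invf_plt ?posrE // => hd.
have : 1 < d * k.+1%:R by move: hd; rewrite -(ltr_pM2r k0) mulVf ?gt_eqF.
lra.
Qed.

End CauchyEquation.

Lemma continuous_additive_linear (R : realType) (g : R -> R) : continuous g ->
  (forall s t, g (s + t) = g s + g t) -> forall t, g t = t * g 1.
Proof.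
move=> g_cont g_add t; apply/eqP; rewrite -subr_eq0; apply/eqP.
apply: (@continuous_additive_eq0 _ (fun t => g t - t * g 1)).
- by move=> x y; rewrite g_add; ring.
- by move=> x; apply: cvgB; [exact: g_cont | exact: cvgMr_tmp].
- by rewrite mul1r subrr.
Qed.

Lemma continuous_multiplicative_expR (R : realType) (g : R -> R) : continuous g ->
  (forall s t, g (s + t) = g s * g t) -> (forall t, g t != 0) ->
  forall t, g t = expR (t * ln (g 1)).
Proof.
move=> g_cont g_mul g_neq0.
have g_gt0 t : 0 < g t.
  have -> : t = t / 2 + t / 2 by field.
  by rewrite g_mul -expr2 exprn_even_gt0 ?g_neq0.
move=> t; rewrite -[LHS]lnK ?posrE //; congr expR.
apply: (@continuous_additive_linear _ (fun x => ln (g x))).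
- by move=> x; apply: continuous_comp; [exact: g_cont | exact: continuous_ln].
- by move=> x y; rewrite g_mul lnM ?posrE.
Qed.

Section QuadraticOrbit.
Variables (R : rcfType) (m : nat) (T : 'M[R]_m) (v : 'rV[R]_m) (a b : R).
Hypothesis vTT : v *m T *m T = a *: (v *m T) + b *: v.

Lemma quadratic_orbit_eigen_split : 0 < a ^+ 2 + 4 * b ->
  exists (e1 e2 : 'rV[R]_m) (l1 l2 : R),
    [/\ v = e1 + e2, e1 *m T = l1 *: e1 & e2 *m T = l2 *: e2].
Proof.
move=> D0; pose sq := Num.sqrt (a ^+ 2 + 4 * b).
have sq2 : sq ^+ 2 = a ^+ 2 + 4 * b by rewrite sqr_sqrtr // ltW.
have sq0 : sq != 0 by rewrite sqrtr_eq0 -ltNge.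
have eb : b = (sq ^+ 2 - a ^+ 2) / 4 by rewrite sq2; field.
pose r1 := (a + sq) / 2; pose r2 := (a - sq) / 2.
exists (sq^-1 *: (v *m T - r2 *: v)), (- sq^-1 *: (v *m T - r1 *: v)), r1, r2.
split; first by apply/rowP => j; rewrite !mxE /r1 /r2; field.
  all: rewrite -scalemxAl mulmxBl -scalemxAl vTT; apply/rowP => j.
  all: by rewrite !mxE /r1 /r2 eb; field.
Qed.

Lemma quadratic_orbit_double_root : a ^+ 2 + 4 * b = 0 ->
  (v *m T - (a / 2) *: v) *m T = (a / 2) *: (v *m T - (a / 2) *: v).
Proof.
move=> D0; have eb : b = - a ^+ 2 / 4 by lra.
by rewrite mulmxBl -scalemxAl vTT; apply/rowP => j; rewrite !mxE eb; field.
Qed.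

End QuadraticOrbit.

Lemma eigenspace_proper (R : realType) (n : nat) (T : 'M[R]_n.+1) (l l' : R)
    (c c' : 'rV[R]_n.+1) :
  l != l' -> c != 0 -> c *m T = l *: c -> c' != 0 -> c' *m T = l' *: c' ->
  proper_proj_subspace (eigenspace T l).
Proof.
move=> d c0 cT c'0 c'T; split.
  rewrite lt0n mxrank_eq0; apply: contra_neq c0 => E0.
  by apply/eqP; rewrite -submx0 -E0; apply/eigenspaceP.
rewrite ltn_neqAle rank_leq_col andbT; apply: contra_neq c'0 => full.
have /eigenspaceP c'E : (c' <= eigenspace T l)%MS.
  by apply: submx_full; rewrite /row_full full.
exact: eigenvector_eq0 d c'E c'T.
Qed.

Section FlowOnCone.
Variables (R : realType) (n : nat).
Local Notation V := 'rV[R]_(n.+1).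
Variables (Om : set V) (f : 'cV[R]_(n.+1)) (Phi : R -> 'M[R]_(n.+1)).
Local Notation fv := (fval f).
Local Notation T := (Phi 1).

Hypothesis Om_ne0 : forall v, Om v -> v != 0.
Hypothesis Om_scale : forall v c, Om v -> c != 0 -> Om (c *: v).
Hypothesis fval_Om : forall v, Om v -> fv v != 0.
Hypothesis Om_convex : forall u v s, Om u -> Om v -> fv u = 1 -> fv v = 1 ->
  0 <= s -> s <= 1 -> Om (s *: u + (1 - s) *: v).
Hypothesis Om_pclosed : pclosed Om.
Hypothesis Om_interior : has_nonempty_interior Om.
Hypothesis Phi_cont : continuous Phi.
Hypothesis Phi_unit : forall t, Phi t \in unitmx.
Hypothesis Phi_mul : forall s t, pgl_eq (Phi (s + t)) (Phi s *m Phi t).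
Hypothesis Phi_inj : forall s t, pgl_eq (Phi s) (Phi t) -> s = t.
Hypothesis Phi_pres : preserves Phi Om.
Hypothesis Phi_orbit : forall v : V, v != 0 ->
  exists L : 'M[R]_(n.+1), \rank L = 2%N /\ forall t, (v *m Phi t <= L)%MS.

Lemma Om_closure v : v != 0 -> closure Om v -> Om v.
Proof. by move=> v0 cv; rewrite -Om_pclosed. Qed.

Lemma Phi_mulmx_eq0 t (v : V) : v *m Phi t = 0 -> v = 0.
Proof. by move=> H; rewrite -(mulmxK (Phi_unit t) v) H mul0mx. Qed.

Lemma Phi0_scalar : exists c : R, c != 0 /\ Phi 0 = c%:M.
Proof.
have [c [c0 e]] := Phi_mul 0 0; rewrite addr0 in e.
exists c; split => //.
have := congr1 (mulmx (invmx (Phi 0))) e.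
by rewrite mulKmx ?Phi_unit // -scalemxAr mulVmx ?Phi_unit // scalemx1.
Qed.

Lemma Phi_commute_up_to_sign s t :
  exists k : R, k ^+ 2 = 1 /\ Phi s *m Phi t = k *: (Phi t *m Phi s).
Proof.
have [c1 [c10 e1]] := Phi_mul s t; have [c2 [c20 e2]] := Phi_mul t s.
rewrite addrC in e2.
have e : Phi s *m Phi t = (c1 / c2) *: (Phi t *m Phi s).
  by rewrite e1 e2 scalerA divfK.
exists (c1 / c2); split => //.
have det_neq0 u : \det (Phi u) != 0 by rewrite -unitfE -unitmxE Phi_unit.
have := congr1 determinant e; rewrite detZ !det_mulmx [X in _ = _ * X]mulrC.
move=> /eqP; rewrite -subr_eq0 -{1}[_ * _]mul1r -mulrBl mulf_eq0.
rewrite mulf_eq0 !(negbTE (det_neq0 _)) !orbF subr_eq0 eq_sym => /eqP h.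
by apply/eqP; rewrite sqr_norm_eq1 -(@pexpr_eq1 _ _ n.+1) // -normrX h normr1.
Qed.

(* The sign ambiguities cancel in [Phi (t/2) *m Phi (t/2)]. *)
Lemma Phi_commute1 t : Phi t *m T = T *m Phi t.
Proof.
have [c [c0 e]] := Phi_mul (t / 2) (t / 2).
rewrite (_ : t / 2 + t / 2 = t) in e; last by field.
have [k [k2 ek]] := Phi_commute_up_to_sign (t / 2) 1.
have -> : Phi t = c^-1 *: (Phi (t / 2) *m Phi (t / 2)).
  by rewrite e scalerA mulVf // scale1r.
rewrite -scalemxAl -scalemxAr; congr (_ *: _).
rewrite -mulmxA ek -scalemxAr mulmxA ek -scalemxAl scalerA -expr2 k2 scale1r.
by rewrite mulmxA.
Qed.

Lemma Phi_stable_eigenvector (l : R) (a : V) t : a *m T = l *: a ->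
  (a *m Phi t) *m T = l *: (a *m Phi t).
Proof. by move=> ea; rewrite -mulmxA Phi_commute1 mulmxA ea -scalemxAl. Qed.

Lemma Om_Phi1_inv (z : V) : Om (z *m T) -> Om z.
Proof.
move=> Oz; have [c [c0 e]] := Phi_mul 1 (-1); rewrite subrr in e.
have [c1 [c10 e0]] := Phi0_scalar.
have := Phi_pres (-1) Oz; rewrite -mulmxA e e0 -scalemxAr mul_mx_scalar scalerA.
move=> /Om_scale /(_ (invr_neq0 (mulf_neq0 c0 c10))).
by rewrite scalerA mulVf ?mulf_neq0 // scale1r.
Qed.

Lemma Phi1_nonscalar (l : R) : ~ (forall v : V, v *m T = l *: v).
Proof.
move=> H.
have eT : T = l%:M.
  apply/row_matrixP => i.
  by rewrite -[T]mul1mx row_mul H -[l%:M]mul1mx row_mul mul_mx_scalar.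
have [c0 [c00 e0]] := Phi0_scalar.
have l0 : l != 0.
  by apply: contraTneq (Phi_unit 1) => l0; rewrite eT l0 unitmxE det_scalar expr0n unitr0.
suff /eqP : (0 : R) = 1 by rewrite eq_sym oner_eq0.
apply: Phi_inj; exists (l / c0); split; first by rewrite mulf_neq0 ?invr_neq0.
by rewrite eT e0 scale_scalar_mx divfK.
Qed.

Lemma orbit_plane (v : V) : v != 0 -> exists L : 'M[R]_(n.+1),
  [/\ \rank L = 2%N, (v <= L)%MS & forall t, (v *m Phi t <= L)%MS].
Proof.
move=> v0; have [L [rL HL]] := Phi_orbit v0; exists L; split => //.
have [c0 [c00 e0]] := Phi0_scalar.
have := HL 0; rewrite e0 mul_mx_scalar => h.
by rewrite -[v]scale1r -(mulVf c00) -scalerA scalemx_sub.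
Qed.

Lemma Phi1_orbit_dependence (v : V) : v != 0 ->
  (exists l, v *m T = l *: v) \/
  (exists a b, v *m T *m T = a *: (v *m T) + b *: v).
Proof.
move=> v0; have [L [rL vL HL]] := orbit_plane v0.
have vTTL : (v *m T *m T <= L)%MS.
  have [c [_ e]] := Phi_mul 1 1.
  by rewrite -mulmxA e -scalemxAr scalemx_sub // HL.
have [vT_v|vT_v] := boolP (v *m T <= v)%MS; first by left; apply/sub_rVP.
right; have [a [b e]] := rank2_span rL vL (HL 1) vTTL v0 vT_v.
by exists b, a; rewrite e addrC.
Qed.

Lemma iter_Phi1_in_cone (v : V) k : Om v -> Om (iter k (fun z => z *m T) v).
Proof. by move=> Ov; elim: k => //= k IH; exact: Phi_pres. Qed.

(* The ratios [p k] of consecutive values of [fv] along the orbit are positive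
   by the sign lemma, while [p k * (p k - p k.+1)] equals
   [(p k - s a / 2)^2 - s^2 (a^2 + 4 b) / 4], so they decrease by a fixed amount. *)
Lemma Phi1_real_roots (v : V) a b : Om v ->
  v *m T *m T = a *: (v *m T) + b *: v -> 0 <= a ^+ 2 + 4 * b.
Proof.
move=> Ov e; rewrite leNgt; apply/negP => D0.
pose x k := iter k (fun z => z *m T) v.
pose u k := fv (x k).
have urec k : u k.+2 = a * u k.+1 + b * u k.
  rewrite /u; suff -> : x k.+2 = a *: x k.+1 + b *: x k by rewrite fvalD !fvalZ.
  elim: k => [|k IH] //.
  have -> : x k.+3 = x k.+2 *m T by [].
  by rewrite {1}IH mulmxDl -!scalemxAl.
have u0 k : u k != 0 by apply/fval_Om/iter_Phi1_in_cone.
pose s := u 0%N * u 1%N.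
have su k : 0 < s * (u k * u k.+1).
  exact: (fval_mulmx_sign_const Om_scale fval_Om Om_convex (Phi_pres 1)
    Ov (iter_Phi1_in_cone k Ov)).
have s0 : s != 0 by rewrite mulf_neq0.
pose p k := s * (u k.+1 / u k).
apply: (@no_uniform_decrease _ p (- (s ^+ 2) * (a ^+ 2 + 4 * b) / 4)).
- by rewrite mulNr -mulrN divr_gt0 // mulr_gt0 ?exprn_even_gt0 // oppr_gt0.
- move=> k; have := su k.
  have -> : s * (u k * u k.+1) = p k * u k ^+ 2 by rewrite /p; field.
  by rewrite pmulr_lgt0 // exprn_even_gt0 ?u0.
- move=> k; have -> : p k * (p k - p k.+1) = p k ^+ 2 - s * a * p k - s ^+ 2 * b.
    by rewrite /p urec; field; rewrite !u0.
  have : 0 <= (p k - s * a / 2) ^+ 2 by rewrite sqr_ge0.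
  nra.
Qed.

Section JordanBlock.
Variables (v w : V) (r : R).
Hypotheses (Ov : Om v) (w0 : w != 0).
Hypotheses (vT : v *m T = r *: v + w) (wT : w *m T = r *: w).

Lemma jordan_eigenvalue_neq0 : r != 0.
Proof.
apply: contra_neq w0 => r0; apply: (@Phi_mulmx_eq0 1).
by rewrite wT r0 scale0r.
Qed.

Let r0 := jordan_eigenvalue_neq0.

Lemma jordan_shift (s : R) : (v + s *: w) *m T = r *: (v + (s + r^-1) *: w).
Proof.
rewrite mulmxDl -scalemxAl vT wT.
by apply/rowP => j; rewrite !mxE; field.
Qed.

Lemma jordan_line_in_cone (k : nat) :
  Om (v + (k%:R / r) *: w) /\ Om (v + (- (k%:R / r)) *: w).
Proof.
elim: k => [|k [IHp IHm]]; first by rewrite mul0r oppr0 scale0r addr0.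
split.
  have := Om_scale (Phi_pres 1 IHp) (invr_neq0 r0).
  rewrite jordan_shift scalerA mulVf // scale1r -natr1.
  by congr (Om (_ + _ *: _)); field.
apply: Om_Phi1_inv; rewrite jordan_shift; apply: Om_scale => //.
by rewrite -natr1 (_ : - ((k%:R + 1) / r) + r^-1 = - (k%:R / r)) //; field.
Qed.

(* [w / r] is the limit of the points [(r / k) (v + (k / r) w)] of the cone. *)
Lemma jordan_fval_neq0 : fv w != 0.
Proof.
apply: fval_Om; apply: Om_closure => //; apply: closure_norm_approx => e e0.
pose k := (Num.Def.archi_bound (`|r| * `|v| / e)).+1.
have hk : `|r| * `|v| / e < k.-1%:R.
  by apply: archi_boundP; rewrite divr_ge0 // ?mulr_ge0 // ltW.
have kp : (0 : R) < k%:R by rewrite ltr0n.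
exists ((r / k%:R) *: (v + (k%:R / r) *: w)); split.
  apply: Om_scale; first exact: (jordan_line_in_cone k).1.
  by rewrite mulf_neq0 // invr_neq0 // gt_eqF.
have -> : w - (r / k%:R) *: (v + (k%:R / r) *: w) = - ((r / k%:R) *: v).
  by apply/rowP => j; rewrite !mxE; field; rewrite r0 gt_eqF.
rewrite normrN normrZ normrM normfV (gtr0_norm kp) mulrAC ltr_pdivrMr //.
move: hk; rewrite ltr_pdivrMr // => hk.
by apply: lt_le_trans hk _; rewrite mulrC ler_pM2l // ler_nat.
Qed.

(* The values of [fv] on the points [v + (k / r) w] have a constant sign pattern
   in both directions, although they are affine in [k] with a nonzero slope. *)
Lemma no_jordan_block : False.
Proof.
pose d := fv w / r.
have d0 : d != 0 by rewrite mulf_neq0 ?invr_neq0 ?jordan_fval_neq0.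
pose P (k : nat) := fv (v + (k%:R / r) *: w).
pose Q (k : nat) := fv (v + (- (k%:R / r)) *: w).
have PE k : P k = fv v + k%:R * d by rewrite /P fvalD fvalZ /d mulrA mulrAC.
have QE k : Q k = fv v - k%:R * d by rewrite /Q fvalD fvalZ /d mulNr mulrA mulrAC.
pose sg := fv v * fv (v *m T).
have sign z : Om z -> 0 < sg * (fv z * fv (z *m T)).
  move=> Oz.
  by have := fval_mulmx_sign_const Om_scale fval_Om Om_convex (Phi_pres 1) Ov Oz.
have hP k : 0 < sg * r * (P k * P k.+1).
  have := sign _ (jordan_line_in_cone k).1; rewrite jordan_shift fvalZ.
  by rewrite /P -natr1 (_ : k%:R / r + r^-1 = (k%:R + 1) / r); [nra | field].
have hQ k : 0 < sg * r * (Q k * Q k.+1).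
  have := sign _ (jordan_line_in_cone k.+1).2; rewrite jordan_shift fvalZ.
  by rewrite /Q -natr1 (_ : - ((k%:R + 1) / r) + r^-1 = - (k%:R / r)); [nra | field].
pose m := Num.Def.archi_bound (`|fv v| / `|d|).
have hm : `|fv v| < m%:R * `|d|.
  by rewrite -ltr_pdivrMr ?normr_gt0 //; apply: archi_boundP; rewrite divr_ge0.
have := sign_alternation_even hP m; have := sign_alternation_even hQ m.
rewrite !PE !QE !mul0r addr0 subr0 -muln2 natrM => hQ2 hP2.
have : 0 < (fv v + m%:R * 2%:R * d) * (fv v - m%:R * 2%:R * d) by nra.
have : `|fv v| ^+ 2 < (m%:R * `|d|) ^+ 2 by rewrite ltrXn2r.
rewrite exprMn !real_normK ?num_real //.
have := ler0n R m; nra.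
Qed.

End JordanBlock.

Lemma cone_eigen_sum (v : V) : Om v -> exists (e1 e2 : V) (l1 l2 : R),
  [/\ v = e1 + e2, e1 *m T = l1 *: e1 & e2 *m T = l2 *: e2].
Proof.
move=> Ov; case: (Phi1_orbit_dependence (Om_ne0 Ov)) => [[l e]|[a [b e]]].
  by exists v, 0, l, l; rewrite addr0 mul0mx scaler0.
case: (ltrgtP (a ^+ 2 + 4 * b) 0) => D.
- by move: (Phi1_real_roots Ov e); rewrite leNgt D.
- exact: quadratic_orbit_eigen_split e D.
have wT := quadratic_orbit_double_root e D.
set w := v *m T - (a / 2) *: v in wT.
have [w0|w0] := eqVneq w 0.
  exists v, 0, (a / 2), (a / 2); rewrite addr0 mul0mx scaler0; split => //.
  by apply/eqP; rewrite -subr_eq0 -/w w0.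
by case: (no_jordan_block Ov w0 (_ : v *m T = (a / 2) *: v + w) wT); rewrite addrC subrK.
Qed.

Lemma no_three_eigenvalues (e1 e2 e3 : V) (l1 l2 l3 : R) :
  e1 != 0 -> e2 != 0 -> e3 != 0 ->
  e1 *m T = l1 *: e1 -> e2 *m T = l2 *: e2 -> e3 *m T = l3 *: e3 ->
  l1 != l2 -> l1 != l3 -> l2 != l3 -> False.
Proof.
move=> e10 e20 e30 h1 h2 h3 d12 d13 d23.
have coef0 c1 c2 c3 : c1 *: e1 + c2 *: e2 + c3 *: e3 = 0 -> [/\ c1 = 0, c2 = 0 & c3 = 0].
  move=> h; split.
  - exact: eigen3_coef0 e10 h1 h2 h3 d12 d13 h.
  - apply: (eigen3_coef0 e20 h2 h1 h3 _ d23 (c2 := c1) (c3 := c3)).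
      by rewrite eq_sym.
    by rewrite -h (addrC (c2 *: e2)).
  - apply: (eigen3_coef0 e30 h3 h1 h2 _ _ (c2 := c1) (c3 := c2)); rewrite 1?eq_sym //.
    by rewrite -h [RHS]addrC addrA.
have v0 : e1 + e2 + e3 != 0.
  apply/eqP => h; have [/eqP] : [/\ (1 : R) = 0, (1 : R) = 0 & (1 : R) = 0].
    by apply: coef0; rewrite !scale1r.
  by rewrite oner_eq0.
have eT : (e1 + e2 + e3) *m T = l1 *: e1 + l2 *: e2 + l3 *: e3.
  by rewrite !mulmxDl h1 h2 h3.
case: (Phi1_orbit_dependence v0) => [[l e]|[a [b e]]].
  have [q1 q2 _] : [/\ l1 - l = 0, l2 - l = 0 & l3 - l = 0].
    apply: coef0; move: e; rewrite eT => /rowP e.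
    by apply/rowP => j; move: (e j); rewrite !mxE; lra.
  by move: d12; rewrite (_ : l1 = l2) ?eqxx //; lra.
have [q1 q2 q3] : [/\ l1 ^+ 2 - a * l1 - b = 0, l2 ^+ 2 - a * l2 - b = 0 &
                     l3 ^+ 2 - a * l3 - b = 0].
  apply: coef0; move: e; rewrite eT !mulmxDl -!scalemxAl h1 h2 h3 !scalerA => /rowP e.
  by apply/rowP => j; move: (e j); rewrite !mxE; lra.
have root_sum (x y : R) : x != y -> x ^+ 2 - a * x - b = 0 -> y ^+ 2 - a * y - b = 0 ->
    x + y = a.
  move=> dxy hx hy; apply/eqP; rewrite -subr_eq0.
  have : (x - y) * (x + y - a) = 0 by rewrite -[0](subrr 0) -{1}hx -hy; ring.
  by move/eqP; rewrite mulf_eq0 [x - y == 0]subr_eq0 (negbTE dxy).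
have := root_sum _ _ d12 q1 q2; have := root_sum _ _ d13 q1 q3.
by move: d23 => /eqP; lra.
Qed.

Lemma cone_has_eigenvector : exists (a0 : V) (l : R), a0 != 0 /\ a0 *m T = l *: a0.
Proof.
have [v0 /nbhs_singleton Ov0] := Om_interior.
have [e1 [e2 [m1 [m2 [ev h1 h2]]]]] := cone_eigen_sum Ov0.
have [e10|e10] := eqVneq e1 0; last by exists e1, m1.
exists e2, m2; split => //; apply/eqP => e20.
by move: (Om_ne0 Ov0); rewrite ev e10 e20 addr0 eqxx.
Qed.

Lemma cone_eigenvector_off (l : R) (v : V) : Om v -> ~~ (v <= eigenspace T l)%MS ->
  exists (b0 : V) (l' : R), [/\ b0 != 0, b0 *m T = l' *: b0 & l != l'].
Proof.
move=> Ov nv; have [e1 [e2 [m1 [m2 [ev h1 h2]]]]] := cone_eigen_sum Ov.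
have sub_or_off (e : V) (k : R) : e *m T = k *: e -> (e <= eigenspace T l)%MS \/
    exists (b0 : V) (l' : R), [/\ b0 != 0, b0 *m T = l' *: b0 & l != l'].
  move=> he; have [->|e0] := eqVneq e 0; first by left; rewrite sub0mx.
  have [lk|dl] := eqVneq l k; last by right; exists e, k.
  by left; apply/eigenspaceP; rewrite lk.
case: (sub_or_off _ _ h1) => [s1|//]; case: (sub_or_off _ _ h2) => [s2|//].
by move: nv; rewrite ev addmx_sub.
Qed.

Lemma cone_two_eigenvalues : exists (l1 l2 : R) (a0 b0 : V),
  [/\ l1 != l2, a0 != 0 /\ a0 *m T = l1 *: a0, b0 != 0 /\ b0 *m T = l2 *: b0 &
      forall x : V, (x <= eigenspace T l1 + eigenspace T l2)%MS].
Proof.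
have [a0 [l1 [a00 ea0]]] := cone_has_eigenvector.
have [v1 [Ov1 nv1]] : exists v1, Om v1 /\ ~~ (v1 <= eigenspace T l1)%MS.
  apply/not_existsP => H; apply: (@Phi1_nonscalar l1) => v; apply/eigenspaceP.
  apply: (interior_subspace_full Om_interior) => w Ow.
  by have := H w; apply: contra_notP => h; split => //; apply/negP.
have [b0 [l2 [b00 eb0 d12]]] := cone_eigenvector_off Ov1 nv1.
exists l1, l2, a0, b0; split => //.
have sub_sum (e : V) (k : R) : e *m T = k *: e ->
    (e <= eigenspace T l1 + eigenspace T l2)%MS.
  move=> he; have [->|e0] := eqVneq e 0; first by rewrite sub0mx.
  have [l1k|d1] := eqVneq l1 k.
    by apply: submx_trans (addsmxSl _ _); apply/eigenspaceP; rewrite l1k.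
  have [l2k|d2] := eqVneq l2 k.
    by apply: submx_trans (addsmxSr _ _); apply/eigenspaceP; rewrite l2k.
  by case: (no_three_eigenvalues a00 b00 e0 ea0 eb0 he d12 d1 d2).
apply: (interior_subspace_full Om_interior) => v Ov.
have [e1 [e2 [m1 [m2 [-> h1 h2]]]]] := cone_eigen_sum Ov.
by rewrite addmx_sub // (sub_sum _ _ h1, sub_sum _ _ h2).
Qed.

Lemma Phi_scalar_on_eigenvector (l l' : R) (c0 a : V) t :
  l != l' -> c0 != 0 -> c0 *m T = l' *: c0 -> a *m T = l *: a ->
  exists k : R, a *m Phi t = k *: a.
Proof.
move=> dl c00 cT aT.
have [->|a0] := eqVneq a 0; first by exists 0; rewrite mul0mx scaler0.
have c_notin_a : ~~ (c0 <= a)%MS.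
  apply: contra c00 => /sub_rVP [k hk]; apply/eqP/(eigenvector_eq0 dl _ cT).
  by rewrite hk -scalemxAl aT !scalerA mulrC.
have v0 : a + c0 != 0.
  apply: contra c_notin_a => /eqP h.
  by rewrite (_ : c0 = - a) ?eqmx_opp // -(addKr a c0) h addr0.
have [L [rL vL HL]] := orbit_plane v0.
have aL : (a <= L)%MS.
  have -> : a = (l - l')^-1 *: ((a + c0) *m T + (- l') *: (a + c0)).
    rewrite mulmxDl aT cT; apply/rowP => j; rewrite !mxE; field.
    by rewrite subr_eq0.
  by rewrite scalemx_sub // addmx_sub // scalemx_sub.
have cL : (c0 <= L)%MS.
  have -> : c0 = (a + c0) + (-1) *: a by rewrite scaleN1r addrAC subrr add0r.
  by rewrite addmx_sub ?scalemx_sub.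
have [k [k' e]] := rank2_span rL aL cL (HL t) a0 c_notin_a.
exists k; apply/eqP; rewrite -subr_eq0; apply/eqP.
(* [a Phi_t - k a] lies in both eigenspaces of [T]. *)
have opp : a *m Phi t - k *: a = - (c0 *m Phi t - k' *: c0).
  by apply/eqP; rewrite -addr_eq0 addrACA -opprD -e mulmxDl subrr.
apply: (eigenvector_eq0 (T := T) dl).
  by rewrite mulmxBl (Phi_stable_eigenvector t aT) -scalemxAl aT scalerBr !scalerA mulrC.
rewrite opp mulNmx mulmxBl (Phi_stable_eigenvector t cT) -scalemxAl cT.
by rewrite scalerN scalerBr !scalerA mulrC.
Qed.

Definition Phi_eigenvalue (a : V) (i : 'I_n.+1) t := (a *m Phi t) 0 i / a 0 i.

Section FlowOnEigenspace.
Variables (l l' : R) (a c : V) (i : 'I_n.+1).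
Hypotheses (dl : l != l') (ai : a 0 i != 0) (aT : a *m T = l *: a).
Hypotheses (c_neq0 : c != 0) (cT : c *m T = l' *: c).
Local Notation lam := (Phi_eigenvalue a i).

Let a_neq0 : a != 0. Proof. by apply: contra_neq ai => ->; rewrite mxE. Qed.

Lemma Phi_eigenvalueE t (b : V) : b *m T = l *: b -> b *m Phi t = lam t *: b.
Proof.
have on_l (x : V) : x *m T = l *: x -> exists k : R, x *m Phi t = k *: x.
  exact: Phi_scalar_on_eigenvector dl c_neq0 cT.
have [k ak] := on_l _ aT.
have -> : lam t = k by rewrite /Phi_eigenvalue ak mxE mulfK.
by move=> bT; exact: (eigenspace_scalar on_l a_neq0 aT ak bT).
Qed.

Lemma Phi_eigenvalue_neq0 t : lam t != 0.
Proof.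
apply: contra_neq a_neq0 => l0; apply: (@Phi_mulmx_eq0 t).
by rewrite (Phi_eigenvalueE t aT) l0 scale0r.
Qed.

Lemma Phi_eigenvalue1 : lam 1 = l.
Proof. by apply: (scaler_injl a_neq0); rewrite -(Phi_eigenvalueE 1 aT). Qed.

Lemma Phi_eigenvalueM s t (k : R) : Phi s *m Phi t = k *: Phi (s + t) ->
  lam s * lam t = k * lam (s + t).
Proof.
move=> e; apply: (scaler_injl a_neq0).
by rewrite -scalerA -(Phi_eigenvalueE t aT) scalemxAl -(Phi_eigenvalueE s aT)
  -mulmxA e -scalemxAr (Phi_eigenvalueE (s + t) aT) scalerA.
Qed.

Lemma continuous_Phi_eigenvalue : continuous lam.
Proof.
have -> : lam = (fun t => (a *m Phi t) 0 i) \* cst (a 0 i)^-1 by [].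
by move=> t; apply: continuousM; [exact: continuous_mulmx_entry | exact: cvg_cst].
Qed.

End FlowOnEigenspace.

Section TwoEigenspaces.
Variables (l1 l2 : R) (a0 b0 : V) (i0 j0 : 'I_n.+1).
Hypotheses (d12 : l1 != l2) (hi0 : a0 0 i0 != 0) (hj0 : b0 0 j0 != 0).
Hypotheses (a0T : a0 *m T = l1 *: a0) (b0T : b0 *m T = l2 *: b0).
Hypothesis eigenspaces_full : forall x : V, (x <= eigenspace T l1 + eigenspace T l2)%MS.
Local Notation A := (eigenspace T l1).
Local Notation B := (eigenspace T l2).
Local Notation lam := (Phi_eigenvalue a0 i0).
Local Notation mu := (Phi_eigenvalue b0 j0).

Let a0_neq0 : a0 != 0. Proof. by apply: contra_neq hi0 => ->; rewrite mxE. Qed.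
Let b0_neq0 : b0 != 0. Proof. by apply: contra_neq hj0 => ->; rewrite mxE. Qed.
Let d21 : l2 != l1. Proof. by rewrite eq_sym. Qed.
Let lamE := Phi_eigenvalueE d12 hi0 a0T b0_neq0 b0T.
Let muE := Phi_eigenvalueE d21 hj0 b0T a0_neq0 a0T.
Let lam_neq0 := Phi_eigenvalue_neq0 d12 hi0 a0T b0_neq0 b0T.
Let mu_neq0 := Phi_eigenvalue_neq0 d21 hj0 b0T a0_neq0 a0T.
Let lam1 := Phi_eigenvalue1 d12 hi0 a0T b0_neq0 b0T.
Let mu1 := Phi_eigenvalue1 d21 hj0 b0T a0_neq0 a0T.

Let rho t := mu t / lam t.

Lemma rho_expR t : rho t = expR (t * ln (rho 1)).
Proof.
apply: continuous_multiplicative_expR => [x|s u|x].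
- apply: continuousM; first exact: continuous_Phi_eigenvalue.
  by apply: continuousV; [exact: lam_neq0 | exact: continuous_Phi_eigenvalue].
- have [c [c0 e]] := Phi_mul s u.
  have lamM := Phi_eigenvalueM d12 hi0 a0T b0_neq0 b0T e.
  have muM := Phi_eigenvalueM d21 hj0 b0T a0_neq0 a0T e.
  rewrite /rho -[lam (s + u)](mulKf c0) -[mu (s + u)](mulKf c0) -lamM -muM.
  by field; rewrite c0 !lam_neq0.
- by rewrite mulf_neq0 ?invr_neq0.
Qed.

Lemma ln_rho1_neq0 : ln (rho 1) != 0.
Proof.
rewrite ln_eq0; last by rewrite rho_expR expR_gt0.
rewrite /rho lam1 mu1.
have l10 : l1 != 0 by rewrite -lam1 lam_neq0.
by apply: contra_neq d12 => h; rewrite -[l2](divfK l10) h mul1r.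
Qed.

Lemma Phi_eigen_sum t (a b : V) : (a <= A)%MS -> (b <= B)%MS ->
  (a + b) *m Phi t = lam t *: (a + rho t *: b).
Proof.
move=> /eigenspaceP aA /eigenspaceP bB.
rewrite mulmxDl (lamE t aA) (muE t bB) scalerDr scalerA /rho.
by rewrite mulrC divfK ?lam_neq0.
Qed.

Lemma eigenspaces_cap0 : (A :&: B == (0 : 'M[R]_(n.+1)))%MS.
Proof.
apply/andP; split; last exact: sub0mx.
apply/row_subP => i; have rA := submx_trans (row_sub i _) (capmxSl A B).
have rB := submx_trans (row_sub i _) (capmxSr A B).
move/eigenspaceP: rA => rA; move/eigenspaceP: rB => rB.
by rewrite (eigenvector_eq0 d12 rA rB) sub0mx.
Qed.

Lemma eigenspaces_sum1 : (A + B == (1%:M : 'M[R]_(n.+1)))%MS.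
Proof.
by apply/andP; split; [exact: submx1 | apply/row_subP => i; exact: eigenspaces_full].
Qed.

Lemma flow_hyperbolic : hyperbolic Phi.
Proof.
exists (ln (rho 1))^-1, A, B; split; rewrite ?invr_neq0 ?ln_rho1_neq0 //.
split; [exact: eigenspaces_cap0 | split; first exact: eigenspaces_sum1].
move=> t a b aA bB ab0.
have act : (a + b) *m Phi ((ln (rho 1))^-1 * t) =
    lam ((ln (rho 1))^-1 * t) *: (a + expR t *: b).
  by rewrite Phi_eigen_sum // (rho_expR (_ * t)) mulrAC mulVf ?ln_rho1_neq0 // mul1r.
split; first by apply: contra_neq ab0; apply: Phi_mulmx_eq0.
exists (lam ((ln (rho 1))^-1 * t))^-1; split; first by rewrite invr_neq0.
by rewrite act scalerA mulVf // scale1r.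
Qed.

Lemma eigen_decomposition (x : V) :
  exists a b : V, [/\ (a <= A)%MS, (b <= B)%MS & x = a + b].
Proof.
have /sub_addsmxP [u ->] := eigenspaces_full x.
by exists (u.1 *m A), (u.2 *m B); rewrite !submxMl.
Qed.

Lemma cone_ray (a b : V) : (a <= A)%MS -> (b <= B)%MS -> Om (a + b) ->
  forall r, 0 < r -> Om (a + r *: b).
Proof.
move=> aA bB Oab r r0; set t := ln r / ln (rho 1).
have := Om_scale (Phi_pres t Oab) (invr_neq0 (lam_neq0 t)).
rewrite Phi_eigen_sum // scalerA mulVf ?lam_neq0 // scale1r (rho_expR t).
by rewrite divfK ?ln_rho1_neq0 // lnK ?posrE.
Qed.

Lemma cone_ray_limit (a b : V) : a != 0 -> (forall r, 0 < r -> Om (a + r *: b)) -> Om a.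
Proof.
move=> a_neq0 ray; apply: Om_closure => //; apply: closure_norm_approx => e e0.
have nb : 0 < `|b| + 1 by rewrite ltr_pwDr // normr_ge0.
exists (a + (e / (`|b| + 1)) *: b); split; first by apply: ray; rewrite divr_gt0.
rewrite opprD addrA subrr add0r normrN normrZ gtr0_norm ?divr_gt0 //.
by rewrite mulrAC ltr_pdivrMr // ltr_pM2l //; lra.
Qed.

Lemma cone_components (a b : V) : (a <= A)%MS -> (b <= B)%MS -> a != 0 -> b != 0 ->
  Om (a + b) -> [/\ Om a, Om b & 0 < fv a * fv b].
Proof.
move=> aA bB a_neq0 b_neq0 Oab; have ray := cone_ray aA bB Oab.
have Oa : Om a := cone_ray_limit a_neq0 ray.
have Ob : Om b.
  apply: (cone_ray_limit (b := a) b_neq0) => r r0.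
  have := Om_scale (ray r^-1 _) (lt0r_neq0 r0); rewrite invr_gt0 => /(_ r0).
  by rewrite scalerDr scalerA mulfV ?gt_eqF // scale1r addrC.
split => //; rewrite lt_def mulf_neq0 ?fval_Om //= leNgt; apply/negP => neg.
have fb0 := fval_Om Ob.
have r_gt0 : 0 < - (fv a / fv b).
  rewrite oppr_gt0 (_ : fv a / fv b = fv a * fv b / fv b ^+ 2); last by field.
  by rewrite pmulr_llt0 // invr_gt0 exprn_even_gt0.
by have := fval_Om (ray _ r_gt0); rewrite fvalD fvalZ mulNr divfK // subrr eqxx.
Qed.

Lemma cone_meets_eigenspaces :
  exists pA pB : V, [/\ (pA <= A)%MS, (pB <= B)%MS, Om pA & Om pB].
Proof.
have [v0 iv] := Om_interior; have Ov0 : Om v0 := nbhs_singleton iv.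
have [a [b [aA bB ev]]] := eigen_decomposition v0.
suff [a' [b' [a'A b'B a'0 b'0 Oab]]] : exists a' b' : V,
    [/\ (a' <= A)%MS, (b' <= B)%MS, a' != 0, b' != 0 & Om (a' + b')].
  by have [Oa Ob _] := cone_components a'A b'B a'0 b'0 Oab; exists a', b'.
have v0_neq0 := Om_ne0 Ov0.
have [a_eq0|a_neq0] := eqVneq a 0.
  have [d d0 Od] := interior_ray a0 iv.
  exists (d *: a0), b; split; rewrite ?scalemx_sub ?scaler_eq0 ?negb_or ?gt_eqF //.
  - exact/eigenspaceP.
  - by apply: contra_neq v0_neq0 => b_eq0; rewrite ev a_eq0 b_eq0 addr0.
  - by rewrite addrC -[b]add0r -a_eq0 -ev.
have [b_eq0|b_neq0] := eqVneq b 0.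
  have [d d0 Od] := interior_ray b0 iv.
  exists a, (d *: b0); split; rewrite ?scalemx_sub ?scaler_eq0 ?negb_or ?gt_eqF //.
  - exact/eigenspaceP.
  - by rewrite -[a]addr0 -b_eq0 -ev.
by exists a, b; split; rewrite -?ev.
Qed.

Lemma on_segment_same_sign (x p q : V) (s c : R) : (p <= A)%MS -> (q <= B)%MS ->
  Om p -> Om q -> 0 < fv p * fv q -> 0 <= s -> s <= 1 -> c != 0 ->
  s *: p + (1 - s) *: q = c *: x -> on_segment_between Om A B x.
Proof.
move=> pA qB Op Oq pq s0 s1 c0 e.
have seg := cone_segment Om_scale fval_Om Om_convex Op Oq pq.
have x0 : x != 0.
  by apply: contra_neq (Om_ne0 (seg s s0 s1)) => x_eq0; rewrite e x_eq0 scaler0.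
by exists p, q; rewrite Om_pclosed; do !split => //; exists s; do !split => //; exists c.
Qed.

Lemma cone_on_segment x : Om x -> on_segment_between Om A B x.
Proof.
move=> Ox; have [pA [pB [pAA pBB OpA OpB]]] := cone_meets_eigenspaces.
have [a [b [aA bB ex]]] := eigen_decomposition x.
have [a_eq0|a_neq0] := eqVneq a 0.
  rewrite ex a_eq0 add0r in Ox *.
  have [Op hp] := cone_rescale_same_sign Om_scale fval_Om Ox OpA.
  apply: (on_segment_same_sign (s := 0) (c := 1) _ bB Op Ox); rewrite ?scalemx_sub //.
  - by rewrite mulrC.
  - by rewrite scale0r add0r subr0 !scale1r.
have [b_eq0|b_neq0] := eqVneq b 0.
  rewrite ex b_eq0 addr0 in Ox *.
  have [Oq hq] := cone_rescale_same_sign Om_scale fval_Om Ox OpB.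
  apply: (on_segment_same_sign (s := 1) (c := 1) aA _ Ox Oq); rewrite ?scalemx_sub //.
  by rewrite subrr scale0r addr0 !scale1r.
rewrite ex in Ox *; have [Oa Ob ab] := cone_components aA bB a_neq0 b_neq0 Ox.
apply: (on_segment_same_sign (s := 2^-1) (c := 2^-1) aA bB Oa Ob ab).
- by rewrite invr_ge0 ler0n.
- by rewrite invf_le1 // ler1n.
- by rewrite invr_neq0 // pnatr_eq0.
- by rewrite scalerDr; congr (_ *: _ + _ *: _); field.
Qed.

Lemma cone_reducible : reducible Om.
Proof.
exists A, B; split; first exact: eigenspace_proper d12 a0_neq0 a0T b0_neq0 b0T.
split; first exact: eigenspace_proper d21 b0_neq0 b0T a0_neq0 a0T.
by split; [exact: eigenspaces_cap0 | exact: cone_on_segment].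
Qed.

End TwoEigenspaces.

Lemma cone_reducible_flow_hyperbolic : reducible Om /\ hyperbolic Phi.
Proof.
have [l1 [l2 [a0 [b0 [d12 [a0_neq0 a0T] [b0_neq0 b0T] full]]]]] := cone_two_eigenvalues.
have /rV0Pn [i0 hi0] := a0_neq0; have /rV0Pn [j0 hj0] := b0_neq0.
split; first exact: cone_reducible d12 hi0 hj0 a0T b0T full.
exact: flow_hyperbolic d12 hi0 hj0 a0T b0T full.
Qed.

End FlowOnCone.

Theorem lemma1p4 (R : realType) (n : nat) (Omega : set 'rV[R]_(n.+1))
  (Phi : R -> 'M[R]_(n.+1)) :
  proj_set Omega ->
  pclosed Omega ->
  has_nonempty_interior Omega ->
  properly_convex Omega ->
  linear_flow Phi ->
  preserves Phi Omega ->
  reducible Omega /\ hyperbolic Phi.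
Proof.
move=> [Om_ne0 Om_scale] Om_pclosed Om_interior [f [_ [f_neq0 [_ K_convex]]]].
move=> [Phi_cont [Phi_unit [Phi_mul [Phi_inj Phi_lines]]]] Phi_pres.
have fval_Om v : Omega v -> fval f v != 0.
  by move=> Ov; apply: f_neq0; rewrite Om_pclosed.
have Om_convex u v s : Omega u -> Omega v -> fval f u = 1 -> fval f v = 1 ->
    0 <= s -> s <= 1 -> Omega (s *: u + (1 - s) *: v).
  have inK w : Omega w -> fval f w = 1 -> (w *m f) 0 0 = 1 /\ pclosure Omega w.
    by move=> Ow fw; rewrite Om_pclosed.
  move=> Ou Ov fu fv s0 s1.
  by have [_] := K_convex u v s (inK _ Ou fu) (inK _ Ov fv) s0 s1; rewrite Om_pclosed.
have Phi_orbit (v : 'rV[R]_(n.+1)) : v != 0 ->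
    exists L : 'M[R]_(n.+1), \rank L = 2%N /\ forall t, (v *m Phi t <= L)%MS.
  by move=> v0; have [L [rL [HL _]]] := Phi_lines v v0; exists L.
exact: (cone_reducible_flow_hyperbolic Om_ne0 Om_scale fval_Om Om_convex Om_pclosed
  Om_interior Phi_cont Phi_unit Phi_mul Phi_inj Phi_pres Phi_orbit).
Qed.
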